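(* Let $W=x_1^{a_1}+\dots+x_N^{a_N}$ with all $a_i\ge3$, and let $X$ be a correlator of type $X_{-1}$ (in the A- or B-model). Then there is a unique $j\in\{1,\dots,N\}$ such that $K_j=1$ and $\ell_j\ge2$, while $K_i=\ell_i=0$ for all $i\ne j$. Furthermore $X=\langle x_j,x_j,x_j^{a_j-2}\alpha,x_j^{a_j-2}\beta\rangle$ for some monomials $\alpha,\beta$ not involving $x_j$.
   Context: A genus-zero correlator (Saito–Givental B-model of $W^T$, or FJRW A-model of $(W,G_W)$ with insertions mapped by Krawitz's isomorphism $\Psi$) is of type $X_{-1}$ if it has at least four insertions and has the form $\langle x_N,\dots,x_N,\dots,x_1,\dots,x_1,\alpha,\beta\rangle$ with $x_i$ appearing $\ell_i\ge0$ times and $\alpha=\prod x_i^{m_i},\beta=\prod x_i^{n_i}$ monomials in the standard basis of $\mathrm{Jac}(W^T)$, and if, setting $b=E_W^{-1}(\ell+m+n+2\cdot\mathbf 1)$ and $K_i=\ell_i-b_i+1$, one has $K_i\in\mathbb Z$ for all $i$ and $\sum_iK_i=1$. For the Fermat sum $W=W^T$, the standard basis consists of $\prod x_i^{r_i}$ with $0\le r_i\le a_i-2$, and $b_i=(\ell_i+m_i+n_i+2)/a_i$. *)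

From HB Require Import structures.
From mathcomp Require Import all_boot all_order all_algebra.
Set Implicit Arguments. Unset Strict Implicit. Unset Printing Implicit Defensive.
Import Order.TTheory GRing.Theory Num.Theory.
Local Open Scope ring_scope.

(* Fermat sum W = x_1^{a_1} + ... + x_N^{a_N}, indices 'I_N, exponents a : 'I_N -> nat.
   A monomial prod_i x_i^{r_i} is its exponent vector r : 'I_N -> nat.
   It lies in the standard basis of Jac(W^T) = Jac(W) iff 0 <= r_i <= a_i - 2. *)
Definition in_std_basis (N : nat) (a : 'I_N -> nat) (r : 'I_N -> nat) : Prop :=
  forall i, (r i <= a i - 2)%N.

(* A genus-zero correlator <x_N,..,x_N,...,x_1,..,x_1, alpha, beta>,
   with x_i appearing l_i times, alpha = prod x_i^{m_i}, beta = prod x_i^{n_i},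
   is encoded by the triple (l, m, n). *)
Record correlator (N : nat) := Correlator {
  ell : 'I_N -> nat;
  alpha : 'I_N -> nat;
  beta : 'I_N -> nat }.

(* b_i = (l_i + m_i + n_i + 2) / a_i   (E_W is diagonal with entries a_i for Fermat W) *)
Definition bcoef (N : nat) (a : 'I_N -> nat) (X : correlator N) (i : 'I_N) : rat :=
  (ell X i + alpha X i + beta X i + 2)%:R / (a i)%:R.

Definition Kcoef (N : nat) (a : 'I_N -> nat) (X : correlator N) (i : 'I_N) : rat :=
  (ell X i)%:R - bcoef a X i + 1.

Definition n_insertions (N : nat) (X : correlator N) : nat :=
  (\sum_(i < N) ell X i + 2)%N.

Definition type_Xm1 (N : nat) (a : 'I_N -> nat) (X : correlator N) : Prop :=
  [/\ (4 <= n_insertions X)%N,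
      in_std_basis a (alpha X),
      in_std_basis a (beta X),
      (forall i, Kcoef a X i \is a Num.int) &
      \sum_(i < N) Kcoef a X i = 1].

From HB Require Import structures.
From mathcomp Require Import all_boot all_order all_algebra zify ring.
Import Order.TTheory GRing.Theory Num.Theory.

Set Implicit Arguments.
Unset Strict Implicit.
Unset Printing Implicit Defensive.

Local Open Scope ring_scope.

(* For the Fermat sum, [a_i K_i = l_i (a_i - 1) + (a_i - 2) - m_i - n_i], and
   [0 <= m_i, n_i <= a_i - 2] confines this to
   [[l_i (a_i - 1) - (a_i - 2), l_i (a_i - 1) + (a_i - 2)]].  Hence an integral
   [K_i] is nonnegative, [K_i = 0] forces [l_i = 0], and [K_i = 1] forces
   [l_i <= 2], with [l_i = 2] only when [m_i = n_i = a_i - 2].  As the [K_i] sum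
   to 1, exactly one of them, [K_j], equals 1 and the others vanish; the bound
   of at least four insertions then gives [l_j = 2]. *)

Lemma sum_nat_num_eq1 (R : archiNumDomainType) (I : finType) (F : I -> R) :
  (forall i, F i \is a Num.nat) -> \sum_i F i = 1 ->
  exists2 j, F j = 1 & forall i, i != j -> F i = 0.
Proof.
move=> FN sumF1.
have [j Fj_neq0 | F0] := pickP [pred i | F i != 0]; last first.
  by move: sumF1; rewrite big1 => [/eqP|i _]; [rewrite eq_sym oner_eq0 | apply/eqP/negbFE/F0].
have Fj_ge1 : 1 <= F j by rewrite -(norm_natr (FN j)) norm_intr_ge1 ?intr_nat.
have rest_ge0 : 0 <= \sum_(i | i != j) F i by apply: sumr_ge0 => i _; apply: natr_ge0.
move: sumF1; rewrite (bigD1 j) //= => sumF1.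
have Fj1 : F j = 1.
  by apply/le_anti; rewrite Fj_ge1 andbT -sumF1 lerDl.
exists j => // i ij; move: sumF1; rewrite Fj1 -[RHS]addr0 => /addrI /psumr_eq0P.
by apply=> // k _; apply: natr_ge0.
Qed.

(* [Kcoef a X i] is, by conversion, [fermat_K (a i) (ell X i) (alpha X i) (beta X i)]. *)
Definition fermat_K (a l m n : nat) : rat := l%:R - (l + m + n + 2)%:R / a%:R + 1.

Lemma fermat_K_intE {a l m n : nat} {k : int} : (0 < a)%N ->
  fermat_K a l m n = k%:~R -> k * a%:Z + (l + m + n + 2)%:Z = (l * a + a)%:Z.
Proof.
move=> a_gt0 Kk; apply: (@intr_inj rat).
have a_neq0 : (a%:R : rat) != 0 by rewrite pnatr_eq0 -lt0n.
rewrite rmorphD rmorphM /= -!pmulrn -Kk /fermat_K !natrD !natrM.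
by field.
Qed.

Section FermatSummand.
Variables (a l m n : nat).
Hypotheses (a_ge3 : (3 <= a)%N) (m_le : (m <= a - 2)%N) (n_le : (n <= a - 2)%N).

Let a_gt0 : (0 < a)%N. Proof. by apply: leq_trans a_ge3. Qed.

Lemma fermat_K_nat : fermat_K a l m n \is a Num.int -> fermat_K a l m n \is a Num.nat.
Proof.
move=> /intrP [k Kk]; have := fermat_K_intE a_gt0 Kk => Ka.
by rewrite Kk natrEint intr_int ler0z /=; nia.
Qed.

Lemma fermat_K_eq0 : fermat_K a l m n = 0 -> l = 0%N.
Proof. by move=> /(fermat_K_intE (k := 0) a_gt0); nia. Qed.

Lemma fermat_K_eq1_ell_le2 : fermat_K a l m n = 1 -> (l <= 2)%N.
Proof. by move=> /(fermat_K_intE (k := 1) a_gt0); nia. Qed.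

Lemma fermat_K_eq1_ell2 : fermat_K a l m n = 1 -> l = 2%N -> m = (a - 2)%N /\ n = (a - 2)%N.
Proof. by move=> /(fermat_K_intE (k := 1) a_gt0); nia. Qed.

End FermatSummand.

Theorem lemma4p6 (N : nat) (a : 'I_N -> nat) (X : correlator N) :
  (forall i, (3 <= a i)%N) ->
  type_Xm1 a X ->
  exists j : 'I_N,
    [/\ [/\ Kcoef a X j = 1, (2 <= ell X j)%N &
            forall i, i != j -> Kcoef a X i = 0 /\ ell X i = 0%N],
        (forall j' : 'I_N,
           [/\ Kcoef a X j' = 1, (2 <= ell X j')%N &
               forall i, i != j' -> Kcoef a X i = 0 /\ ell X i = 0%N] -> j' = j) &
        exists alpha' beta' : 'I_N -> nat,
          [/\ alpha' j = 0%N, beta' j = 0%N,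
              forall i, ell X i = (if i == j then 2 else 0)%N,
              forall i, alpha X i = (if i == j then a j - 2 else alpha' i)%N &
              forall i, beta X i = (if i == j then a j - 2 else beta' i)%N]].
Proof.
move=> a_ge3 [insertions_ge4 stdA stdB Kint sumK1].
have Knat i : Kcoef a X i \is a Num.nat.
  exact: fermat_K_nat (a_ge3 i) (stdA i) (stdB i) (Kint i).
have [j Kj1 Kj0] := sum_nat_num_eq1 Knat sumK1.
have ell0 i : i != j -> ell X i = 0%N.
  by move/Kj0; apply: fermat_K_eq0 (a_ge3 i) (stdA i) (stdB i).
have ellj2 : ell X j = 2%N.
  have : n_insertions X = (ell X j + 2)%N.
    by rewrite /n_insertions (bigD1 j) //= big1 ?addn0 // => i /ell0.
  by have := fermat_K_eq1_ell_le2 (a_ge3 j) (stdA j) (stdB j) Kj1; lia.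
have [alphaj betaj] := fermat_K_eq1_ell2 (a_ge3 j) (stdA j) (stdB j) Kj1 ellj2.
exists j; split.
- by rewrite ellj2; split=> // i ij; split; [apply: Kj0 | apply: ell0].
- move=> j' [_ _ Kj'0]; apply/eqP; apply: contraT => j'j.
  by have [] := Kj'0 j; rewrite 1?eq_sym // Kj1 => /eqP; rewrite oner_eq0.
- exists (fun i => if i == j then 0%N else alpha X i).
  exists (fun i => if i == j then 0%N else beta X i).
  by split; rewrite ?eqxx // => i; case: eqVneq => [->|/ell0].
Qed.
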